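(* Let $\Omega\subset\mathbb{R}^3$ be a MAC compatible bounded domain, $(\mathcal M,\mathcal E)$ a MAC grid, $\varrho\in L_{\mathcal M}$, $\boldsymbol u=(u_1,u_2,u_3)\in\mathbf H_{\mathcal E,0}$, $i\in\{1,2,3\}$ and $\varphi=(\varphi_\sigma)\in H^{(i)}_{\mathcal E,0}$. With the primal fluxes $F_{K,\sigma}$ and dual fluxes $F_{\sigma,\varepsilon}$ defined from $(\varrho,\boldsymbol u)$ as in the context, $$\sum_{\sigma\in\mathcal E^{(i)}_{\rm int}}\ \sum_{\varepsilon\text{ face of }D_\sigma}F_{\sigma,\varepsilon}u_\varepsilon\varphi_\sigma=\sum_{j=1}^3S_j,$$ where $$S_i=\sum_{K=[\overrightarrow{\sigma\sigma'}],\ \sigma,\sigma'\in\mathcal E^{(i)}}\big(\varrho^{\rm up}_\sigma u_\sigma|D_{K,\sigma}|+\varrho^{\rm up}_{\sigma'}u_{\sigma'}|D_{K,\sigma'}|\big)(\mathcal R^{(i)}_{\mathcal M}u_i)_K\,\frac{\varphi_\sigma-\varphi_{\sigma'}}{d(\boldsymbol x_\sigma,\boldsymbol x_{\sigma'})},$$ and, for $j\neq i$, $$S_j=\sum_{\tau\in\mathcal E^{(j)}_{\rm int}}|D_\tau|\frac{\varrho^{\rm up}_\tau u_\tau}{4}\Big[(u_{\sigma_3}+u_{\sigma_1})\frac{\varphi_{\sigma_3}-\varphi_{\sigma_1}}{d(\boldsymbol x_{\sigma_1},\boldsymbol x_{\sigma_3})}+(u_{\sigma_4}+u_{\sigma_2})\frac{\varphi_{\sigma_4}-\varphi_{\sigma_2}}{d(\boldsymbol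 x_{\sigma_2},\boldsymbol x_{\sigma_4})}\Big],$$ where $\sigma_1,\dots,\sigma_4$ are the four faces of $\mathcal E^{(i)}$ neighbouring $\tau$ (i.e. the faces in $\mathcal E^{(i)}$ of the two cells sharing $\tau$), labelled so that $\boldsymbol x_{\sigma_1}-\boldsymbol x_{\sigma_3}=\boldsymbol x_{\sigma_2}-\boldsymbol x_{\sigma_4}=\beta\boldsymbol e_j$ for some $\beta>0$.
   Context: MAC compatible domain: bounded connected open $\Omega$ whose closure is a finite union of closed rectangular parallelepipeds with faces orthogonal to $\boldsymbol e_1,\boldsymbol e_2,\boldsymbol e_3$. MAC grid $(\mathcal M,\mathcal E)$: structured partition $\mathcal M$ of $\Omega$ into rectangular parallelepipeds $K$; faces $\mathcal E$, $\mathcal E(K)$ the faces of $K$, $\mathcal E^{(i)}$ (resp. $\mathcal E^{(i)}_{\rm int}$) the (interior) faces orthogonal to $\boldsymbol e_i$; $\sigma=K|L$ common face; $\boldsymbol x_\sigma$ face mass centre; $d(\cdot,\cdot)$ Euclidean distance. $K=[\overrightarrow{\sigma\sigma'}]$ means $\sigma,\sigma'\in\mathcal E^{(i)}\cap\mathcal E(K)$ with $(\boldsymbol x_{\sigma'}-\boldsymbol x_\sigma)\cdot\boldsymbol e_i>0$. $D_{K,\sigma}$ is the half of $K$ adjacent to $\sigma$; dual cells $D_\sigma=D_{K,\sigma}\cup D_{L,\sigma}$ for $\sigma=K|L$, $D_{K,\sigma}$ for boundary $\sigma$; dual faces $\varepsilon=\sigma|\sigma'$ separate $D_\sigma,D_{\sigma'}$.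 $L_{\mathcal M}$: piecewise constants on cells (values $\varrho_K$); $H^{(i)}_{\mathcal E,0}$: piecewise constants on $D_\sigma$, $\sigma\in\mathcal E^{(i)}$ (values $u_\sigma$), vanishing for boundary $\sigma$; $\mathbf H_{\mathcal E,0}=\prod_iH^{(i)}_{\mathcal E,0}$; for $\tau\in\mathcal E^{(j)}$, $u_\tau$ denotes the value of $u_j$ on $D_\tau$. Fluxes: $u_{K,\sigma}=u_\sigma\boldsymbol e_i\cdot\boldsymbol n_{K,\sigma}$ for $\sigma\in\mathcal E^{(i)}\cap\mathcal E(K)$; $F_{K,\sigma}=|\sigma|\varrho^{\rm up}_\sigma u_{K,\sigma}$ with $\varrho^{\rm up}_\sigma=\varrho_K$ if $u_{K,\sigma}\ge0$ and $\varrho_L$ otherwise ($\sigma=K|L$), and $F_{K,\sigma}=0$ on boundary faces. Dual fluxes for $\sigma=K|L\in\mathcal E^{(i)}_{\rm int}$: if $\varepsilon=\sigma|\sigma'\subset K$ is orthogonal to $\boldsymbol e_i$ then $F_{\sigma,\varepsilon}=\frac12[F_{K,\sigma}\boldsymbol n_{K,\sigma}+F_{K,\sigma'}\boldsymbol n_{K,\sigma'}]\cdot\boldsymbol n_{D_\sigma,\varepsilon}$; if $\varepsilon$ is orthogonal to $\boldsymbol e_j$, $j\neq i$, and $\varepsilon\subset\tau\cup\tau'$ with $\tau\in\mathcal E(K)$, $\tau'\in\mathcal E(L)$, then $F_{\sigma,\varepsilon}=\frac12(F_{K,\tau}+F_{L,\tau'})$; fluxes through dual faces on $\partial\Omega$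 are zero. $u_\varepsilon=\frac12(u_\sigma+u_{\sigma'})$ for $\varepsilon=\sigma|\sigma'$ interior. $(\mathcal R^{(i)}_{\mathcal M}u_i)_K=\frac12\sum_{\sigma\in\mathcal E^{(i)}\cap\mathcal E(K)}u_\sigma$. *)

From HB Require Import structures.
From mathcomp Require Import all_boot all_order all_algebra.
From mathcomp Require Import reals.
Set Implicit Arguments. Unset Strict Implicit. Unset Printing Implicit Defensive.
Import Order.TTheory GRing.Theory Num.Theory.
Local Open Scope ring_scope.

Definition idx := (nat * nat * nat)%type.

Definition coord (k : idx) (j : 'I_3) : nat :=
  match val j with 0 => k.1.1 | 1 => k.1.2 | _ => k.2 end.
Definition setc (k : idx) (j : 'I_3) (n : nat) : idx :=
  match val j with
  | 0 => (n, k.1.2, k.2) | 1 => (k.1.1, n, k.2) | _ => (k.1.1, k.1.2, n) end.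
(* k + e_j and k - e_j (the latter truncated at 0; only used when coord k j > 0
   or in a position where the truncation is irrelevant) *)
Definition nxt (k : idx) (j : 'I_3) : idx := setc k j (coord k j).+1.
Definition prv (k : idx) (j : 'I_3) : idx := setc k j (coord k j).-1.

Definition adjc (a b : idx) : bool :=
  [exists j : 'I_3, (b == nxt a j) || (a == nxt b j)].

(* A MAC grid on a MAC compatible domain: the (interior of the) union of a set
   of cells of a tensor grid with nodes  xc j 0 < xc j 1 < ... < xc j (N j)
   in direction e_j.  Cell k = prod_j [xc j k_j, xc j (k_j+1)]; inM k says the
   cell belongs to the partition M.  Connectedness of Omega = connectedness of
   the cells through common faces. *)
Record MACgrid (R : realType) := {
  N : 'I_3 -> nat;
  xc : 'I_3 -> nat -> R;
  inM : idx -> bool;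
  xc_incr : forall j n, (n < N j)%N -> xc j n < xc j n.+1;
  inM_bound : forall k, inM k -> forall j, (coord k j < N j)%N;
  inM_conn : forall a b, inM a -> inM b ->
    exists p : seq idx, [&& all inM p, path adjc a p & last a p == b]
}.

Definition i0 : 'I_3 := @Ordinal 3 0 isT.
Definition i1 : 'I_3 := @Ordinal 3 1 isT.
Definition i2 : 'I_3 := @Ordinal 3 2 isT.

Section MAC.
Variable R : realType.
Variable g : MACgrid R.

Definition hstep (j : 'I_3) (n : nat) : R := xc g j n.+1 - xc g j n.
Definition vol (k : idx) : R := \prod_(m < 3) hstep m (coord k m).
Definition volD (k : idx) : R := vol k / 2.

(* Faces orthogonal to e_j are indexed by f : idx: the face at abscissa
   xc j (coord f j) whose adjacent cells are prv f j (the "left" cell, on the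
   -e_j side) and f (the "right" cell).  Cell K has e_j-faces K (left face)
   and nxt K j (right face), so K = [->(K, nxt K j)] in direction j. *)
Definition area (j : 'I_3) (f : idx) : R :=
  \prod_(m < 3 | m != j) hstep m (coord f m).
Definition xface (j : 'I_3) (f : idx) : 'I_3 -> R := fun m =>
  if m == j then xc g j (coord f j)
  else (xc g m (coord f m) + xc g m (coord f m).+1) / 2.
Definition dist (p q : 'I_3 -> R) : R := Num.sqrt (\sum_(m < 3) (p m - q m) ^+ 2).

Definition inEf (j : 'I_3) (f : idx) : bool :=
  ((0 < coord f j)%N && inM g (prv f j)) || inM g f.
Definition isInt (j : 'I_3) (f : idx) : bool :=
  [&& (0 < coord f j)%N, inM g (prv f j) & inM g f].
Definition isBnd (j : 'I_3) (f : idx) : bool := inEf j f && ~~ isInt j f.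

Definition sumI (P : pred idx) (F : idx -> R) : R :=
  \sum_(a < (N g i0).+1) \sum_(b < (N g i1).+1)
    \sum_(c < (N g i2).+1 | P (a : nat, b : nat, c : nat)) F (a : nat, b : nat, c : nat).

(* outward normal of K on its e_j-face of side s (true = +e_j side) *)
Definition sgn (s : bool) : R := if s then 1 else -1.
Definition faceof (K : idx) (j : 'I_3) (s : bool) : idx := if s then nxt K j else K.
Definition nbr (K : idx) (j : 'I_3) (s : bool) : idx := if s then nxt K j else prv K j.

Variables (rho : idx -> R) (u : 'I_3 -> idx -> R).

(* u_{K,sigma} = u_sigma e_j . n_{K,sigma} *)
Definition uK (K : idx) (j : 'I_3) (s : bool) : R := sgn s * u j (faceof K j s).
Definition FK (K : idx) (j : 'I_3) (s : bool) : R :=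
  let f := faceof K j s in
  if isInt j f then
    area j f * (if 0 <= uK K j s then rho K else rho (nbr K j s)) * uK K j s
  else 0.
(* upwind density rho^up_sigma of sigma = K|L, K = left cell, so that
   u_{K,sigma} = u_sigma *)
Definition rhoup (j : 'I_3) (f : idx) : R :=
  if 0 <= u j f then rho (prv f j) else rho f.

Variables (i : 'I_3) (phi : idx -> R).

(* dual flux through the e_i-orthogonal dual face of D_sigma lying in the cell C
   (on side s of D_sigma) :
   1/2 [F_{C,sigma} n_{C,sigma} + F_{C,sigma'} n_{C,sigma'}] . n_{D_sigma,eps} *)
Definition FdualI (C : idx) (s : bool) : R :=
  (FK C i (~~ s) * sgn (~~ s) + FK C i s * sgn s) / 2 * sgn s.

Definition dualsum : R :=
  sumI (isInt i) (fun f =>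
    let K := prv f i in let L := f in
    ( FdualI K false * ((u i f + u i (prv f i)) / 2)
    + FdualI L true * ((u i f + u i (nxt f i)) / 2)
    + \sum_(j < 3 | j != i) \sum_(s : bool)
        (FK K j s + FK L j s) / 2 * ((u i f + u i (nbr f j s)) / 2))
    * phi f).

Definition Si : R :=
  sumI (inM g) (fun K =>
    let s := K in let s' := nxt K i in
    (rhoup i s * u i s * volD K + rhoup i s' * u i s' * volD K)
    * ((u i s + u i s') / 2)
    * ((phi s - phi s') / dist (xface i s) (xface i s'))).

(* S_j, j <> i : tau = (j,t) interior, cells prv t j (left) and t (right);
   sigma_1 = t, sigma_3 = prv t j, sigma_2 = nxt t i, sigma_4 = nxt (prv t j) i,
   so that x_{sigma_1} - x_{sigma_3} = x_{sigma_2} - x_{sigma_4} = beta e_j, beta>0 *)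
Definition Sj (j : 'I_3) : R :=
  sumI (isInt j) (fun t =>
    let c1 := prv t j in let c2 := t in
    let s1 := c2 in let s3 := c1 in let s2 := nxt c2 i in let s4 := nxt c1 i in
    (volD c1 + volD c2) * (rhoup j t * u j t / 4) *
    ( (u i s3 + u i s1) * ((phi s3 - phi s1) / dist (xface i s1) (xface i s3))
    + (u i s4 + u i s2) * ((phi s4 - phi s2) / dist (xface i s2) (xface i s4)))).

Definition Sdir (j : 'I_3) : R := if j == i then Si else Sj j.

End MAC.

(* Every dual flux is half a sum of primal fluxes |tau| rho^up_tau u_tau, so
   the left-hand side splits into contributions of single primal faces tau,
   each multiplied by u_eps phi_sigma for the (at most four) faces sigma of
   E^(i) around tau.  Reindexing each contribution by the face tau (summation
   by parts, where the shifted-out boundary slices vanish because u and phi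
   vanish on boundary faces) collects the values phi_sigma into the
   differences phi_sigma - phi_sigma'.  The weights then match those of S_i and
   S_j because |D_{K,sigma}| = |K|/2 = h_j(K) |tau|/2 and d(x_sigma, x_sigma') is
   the width of K (direction i) or the mean of two widths (direction j). *)

From Pilot Require Import Defs.
From HB Require Import structures.
From mathcomp Require Import all_boot all_order all_algebra.
From mathcomp Require Import reals.
From mathcomp Require Import ring lra.
Import Order.TTheory GRing.Theory Num.Theory.
Set Implicit Arguments. Unset Strict Implicit.
Local Open Scope ring_scope.
(* [coord] of vector.v is also in scope. *)
Local Notation coord := Defs.coord.

Lemma coord_setc k j n m : coord (setc k j n) m = if m == j then n else coord k m.
Proof.
by case: k => [[a b] c]; case: j => [[|[|[|j]]] hj]; case: m => [[|[|[|m]]] hm].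
Qed.

Lemma coord_nxt k j m :
  coord (nxt k j) m = if m == j then (coord k j).+1 else coord k m.
Proof. exact: coord_setc. Qed.

Lemma coord_prv k j m :
  coord (prv k j) m = if m == j then (coord k j).-1 else coord k m.
Proof. exact: coord_setc. Qed.

Lemma idx_ext a b : (forall m, coord a m = coord b m) -> a = b.
Proof.
case: a => [[a1 a2] a3]; case: b => [[b1 b2] b3] H.
by have := H i0; have := H i1; have := H i2; rewrite /coord /= => -> -> ->.
Qed.

Lemma prv_nxt k j : prv (nxt k j) j = k.
Proof.
apply: idx_ext => m; rewrite coord_prv !coord_nxt.
by case: eqP => // ->; rewrite eqxx.
Qed.

Lemma nxt_prv k j : (0 < coord k j)%N -> nxt (prv k j) j = k.
Proof.
move=> h; apply: idx_ext => m; rewrite coord_nxt !coord_prv.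
by case: eqP => // ->; rewrite eqxx prednK.
Qed.

Lemma nxt_prvC k i j : j != i -> nxt (prv k j) i = prv (nxt k i) j.
Proof.
move=> hji; apply: idx_ext => m; rewrite coord_nxt !coord_prv !coord_nxt.
case: (eqVneq m i) => [->|hmi]; first by rewrite eq_sym (negbTE hji).
by case: (m == j); rewrite // (negbTE hji).
Qed.

Lemma nxtC k i j : nxt (nxt k j) i = nxt (nxt k i) j.
Proof.
apply: idx_ext => m; rewrite !coord_nxt.
case: (eqVneq i j) => [->|hij] //.
by case: (eqVneq m i) => [->|//]; rewrite (negbTE hij).
Qed.

Lemma ord3P (j : 'I_3) : [\/ j = i0, j = i1 | j = i2].
Proof.
case: j => [[|[|[|j]]] hj] //; [apply: Or31|apply: Or32|apply: Or33]; exact: val_inj.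
Qed.

Lemma big_ord_shift_vanish (V : nmodType) (h : nat -> V) n :
  h 0%N = 0 -> h n.+1 = 0 -> \sum_(a < n.+1) h a.+1 = \sum_(a < n.+1) h a.
Proof.
move=> h0 hn; rewrite big_ord_recr /= hn addr0 big_ord_recl /= h0 add0r.
exact: eq_bigr.
Qed.

Lemma upwind_oppr (R : realDomainType) (x a b : R) :
  (if 0 <= - x then a else b) * - x = - ((if 0 <= x then b else a) * x).
Proof.
case: (ltrgtP x 0) => [h|h|->]; last by rewrite oppr0 !mulr0 oppr0.
- by rewrite oppr_ge0 (ltW h) mulrN.
- by rewrite oppr_ge0 (lt_geF h) mulrN.
Qed.

Section Grid.
Variables (R : realType) (g : MACgrid R).

Definition boxsum (F : idx -> R) : R := sumI g (fun _ => true) F.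

Lemma sumI_mkcond P F : sumI g P F = boxsum (fun k => if P k then F k else 0).
Proof.
rewrite /boxsum /sumI; apply: eq_bigr => a _; apply: eq_bigr => b _.
exact: big_mkcond.
Qed.

Lemma eq_boxsum F G : F =1 G -> boxsum F = boxsum G.
Proof.
move=> H; rewrite /boxsum /sumI.
by apply: eq_bigr => a _; apply: eq_bigr => b _; apply: eq_bigr => c _.
Qed.

Lemma boxsumD F G : boxsum (fun k => F k + G k) = boxsum F + boxsum G.
Proof.
rewrite /boxsum /sumI -big_split; apply: eq_bigr => a _.
by rewrite -big_split; apply: eq_bigr => b _; apply: big_split.
Qed.

Lemma exchange_boxsum (I : Type) (r : seq I) (P : pred I) (F : I -> idx -> R) :
  boxsum (fun k => \sum_(x <- r | P x) F x k) = \sum_(x <- r | P x) boxsum (F x).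
Proof.
rewrite /boxsum /sumI.
under eq_bigr => a _ do under eq_bigr => b _ do rewrite exchange_big.
under eq_bigr => a _ do rewrite exchange_big.
by rewrite exchange_big.
Qed.

Lemma boxsum_shift j (G : idx -> R) :
  (forall k, coord k j = 0%N -> G k = 0) ->
  (forall k, coord k j = N g j -> G (nxt k j) = 0) ->
  boxsum (fun k => G (nxt k j)) = boxsum G.
Proof.
move=> G0 GN; rewrite /boxsum /sumI.
case: (ord3P j) => -> in G0 GN *; rewrite /nxt /setc /coord /= in GN *.
- apply: (@big_ord_shift_vanish _ (fun a => \sum_(b < (N g i1).+1)
    \sum_(c < (N g i2).+1) G (a, b : nat, c : nat)) (N g i0)).
    by apply: big1 => b _; apply: big1 => c _; apply: G0.
  by apply: big1 => b _; apply: big1 => c _; apply: (GN (_, _, _)).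
- apply: eq_bigr => a _.
  apply: (@big_ord_shift_vanish _
    (fun b => \sum_(c < (N g i2).+1) G (a : nat, b, c : nat)) (N g i1)).
    by apply: big1 => c _; apply: G0.
  by apply: big1 => c _; apply: (GN (_, _, _)).
- apply: eq_bigr => a _; apply: eq_bigr => b _.
  apply: (@big_ord_shift_vanish _ (fun c => G (a : nat, b : nat, c)) (N g i2)).
    exact: G0.
  exact: (GN (_, _, _)).
Qed.

Lemma isInt_inM j f : isInt g j f -> inM g f.
Proof. by case/and3P. Qed.

Lemma isInt_nxt j c : isInt g j (nxt c j) = inM g c && inM g (nxt c j).
Proof. by rewrite /isInt coord_nxt eqxx prv_nxt. Qed.

Lemma isInt_coord0 j k : coord k j = 0%N -> isInt g j k = false.
Proof. by move=> hk; rewrite /isInt hk. Qed.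

Lemma inM_coordN c j : inM g c -> coord c j = N g j -> False.
Proof. by move=> /inM_bound/(_ j) h1 h2; rewrite h2 ltnn in h1. Qed.

Lemma isInt_nxt_coordN j k : coord k j = N g j -> isInt g j (nxt k j) = false.
Proof.
move=> hk; rewrite isInt_nxt; case hM: (inM g (nxt k j)); rewrite ?andbF //.
have /(_ j) := inM_bound hM.
by rewrite coord_nxt eqxx hk ltnNge leqnSn.
Qed.

Lemma isBnd_inM j f : inM g f -> ~~ isInt g j f -> isBnd g j f.
Proof. by move=> hM hI; rewrite /isBnd /inEf hM orbT. Qed.

Lemma isBnd_inM_prv j f :
  (0 < coord f j)%N -> inM g (prv f j) -> ~~ isInt g j f -> isBnd g j f.
Proof. by move=> h0 hM hI; rewrite /isBnd /inEf h0 hM. Qed.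

Lemma eq_area j a b :
  (forall m, m != j -> coord a m = coord b m) -> area g j a = area g j b.
Proof. by move=> H; apply: eq_bigr => m hm; rewrite H. Qed.

Lemma area_nxt j c : area g j (nxt c j) = area g j c.
Proof. by apply: eq_area => m hm; rewrite coord_nxt (negbTE hm). Qed.

Lemma area_prv j c : area g j (prv c j) = area g j c.
Proof. by apply: eq_area => m hm; rewrite coord_prv (negbTE hm). Qed.

Lemma vol_area j k : vol g k = hstep g j (coord k j) * area g j k.
Proof. by rewrite /vol (bigD1 j). Qed.

Lemma hstep_gt0 j n : (n < N g j)%N -> 0 < hstep g j n.
Proof. by move=> h; rewrite subr_gt0; apply: xc_incr. Qed.

Lemma dist_along (p q : 'I_3 -> R) j :
  (forall m, m != j -> p m = q m) -> dist p q = `|p j - q j|.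
Proof.
move=> H; rewrite /dist (bigD1 j) //= big1 ?addr0 ?sqrtr_sqr // => m hm.
by rewrite H // subrr expr0n.
Qed.

Lemma xface_offdir i a b m :
  m != i -> coord a m = coord b m -> xface g i a m = xface g i b m.
Proof. by move=> hm h; rewrite /xface (negbTE hm) h. Qed.

Lemma dist_xface_cell i K : inM g K ->
  dist (xface g i K) (xface g i (nxt K i)) = hstep g i (coord K i).
Proof.
move=> hM; rewrite (@dist_along _ _ i).
  rewrite /xface eqxx coord_nxt eqxx -opprB normrN gtr0_norm //.
  exact: hstep_gt0 (inM_bound hM i).
by move=> m hm; apply: xface_offdir => //; rewrite coord_nxt (negbTE hm).
Qed.

Lemma dist_xface_adj i j a b : j != i ->
  (forall m, m != j -> coord a m = coord b m) ->
  coord a j = (coord b j).+1 -> (coord a j < N g j)%N ->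
  dist (xface g i a) (xface g i b) =
    (hstep g j (coord b j) + hstep g j (coord a j)) / 2.
Proof.
move=> hji H ha hN; rewrite (@dist_along _ _ j); last first.
  move=> m hm; case: (eqVneq m i) => [->|hmi]; last first.
    by apply: xface_offdir => //; rewrite H.
  by rewrite /xface eqxx H // eq_sym.
have hb : (coord b j < N g j)%N by rewrite -ltnS -ha ltnW.
have := hstep_gt0 hN; have := hstep_gt0 hb.
rewrite /xface (negbTE hji) ha /hstep => hb' ha'.
by rewrite ger0_norm; [field | lra].
Qed.

End Grid.

Section Fluxes.
Variables (R : realType) (g : MACgrid R).
Variables (rho : idx -> R) (u : 'I_3 -> idx -> R) (i : 'I_3) (phi : idx -> R).
Hypothesis hu : forall (j : 'I_3) (f : idx), isBnd g j f -> u j f = 0.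
Hypothesis hphi : forall f : idx, isBnd g i f -> phi f = 0.

Local Notation boxsum := (boxsum g).

Lemma FK_false c j : FK g rho u c j false =
  if inM g c then - (area g j c * rhoup rho u j c * u j c) else 0.
Proof.
rewrite /FK /faceof /uK /sgn /nbr /rhoup /= mulN1r.
case hI: (isInt g j c).
  by rewrite (isInt_inM hI) -mulrA upwind_oppr mulrN mulrA.
case hM: (inM g c) => //.
by rewrite hu ?mulr0 ?oppr0 // isBnd_inM // hI.
Qed.

Lemma FK_true c j : FK g rho u c j true =
  if inM g c then area g j c * rhoup rho u j (nxt c j) * u j (nxt c j) else 0.
Proof.
rewrite /FK /faceof /uK /sgn /nbr /rhoup /= mul1r isInt_nxt prv_nxt area_nxt.
case hM: (inM g c) => //=; case hM2: (inM g (nxt c j)) => //.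
by rewrite hu ?mulr0 // isBnd_inM_prv ?coord_nxt ?eqxx ?prv_nxt ?isInt_nxt ?hM ?hM2.
Qed.

Definition cell_weight K :=
  (rhoup rho u i K * u i K + rhoup rho u i (nxt K i) * u i (nxt K i))
  * area g i K / 2 * ((u i K + u i (nxt K i)) / 2).

Definition quarter_flux j t := area g j t * rhoup rho u j t * u j t / 4.

Lemma Si_cellwise : Si g rho u i phi =
  boxsum (fun K => if inM g K then cell_weight K * (phi K - phi (nxt K i)) else 0).
Proof.
rewrite /Si sumI_mkcond; apply: eq_boxsum => K; case hM: (inM g K) => //.
rewrite dist_xface_cell // /volD (vol_area g i K) /cell_weight.
have := hstep_gt0 (inM_bound hM i) => hp.
by field; apply: lt0r_neq0.
Qed.

Lemma Sj_facewise j : j != i -> Sj g rho u i phi j =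
  boxsum (fun t => if isInt g j t then quarter_flux j t *
    ((u i (prv t j) + u i t) * (phi (prv t j) - phi t)
   + (u i (nxt (prv t j) i) + u i (nxt t i))
     * (phi (nxt (prv t j) i) - phi (nxt t i)))
  else 0).
Proof.
move=> hji; rewrite /Sj sumI_mkcond; apply: eq_boxsum => t.
case hI: (isInt g j t) => //; case/and3P: hI => h0 _ hM.
have hc : coord t j = (coord (prv t j) j).+1 by rewrite coord_prv eqxx prednK.
have hN := inM_bound hM j.
rewrite (@dist_xface_adj _ _ i j t (prv t j)) //; last first.
  by move=> m hm; rewrite coord_prv (negbTE hm).
rewrite (@dist_xface_adj _ _ i j (nxt t i) (nxt (prv t j) i)) //; first last.
- by rewrite coord_nxt (negbTE hji).
- by rewrite !coord_nxt (negbTE hji) coord_prv eqxx prednK.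
- move=> m hm; rewrite !coord_nxt !coord_prv (negbTE hm) [i == j]eq_sym.
  by rewrite (negbTE hji); case: (m == i).
rewrite !coord_nxt (negbTE hji) /volD (vol_area g j (prv t j)) (vol_area g j t).
rewrite area_prv /quarter_flux.
have p1 := hstep_gt0 hN.
have p2 : 0 < hstep g j (coord (prv t j) j) by apply: hstep_gt0; rewrite -ltnS -hc ltnW.
by field; apply: lt0r_neq0; lra.
Qed.

Definition dual_i_left f := if isInt g i f then
  FdualI g rho u i (prv f i) false * ((u i f + u i (prv f i)) / 2) * phi f else 0.
Definition dual_i_right f := if isInt g i f then
  FdualI g rho u i f true * ((u i f + u i (nxt f i)) / 2) * phi f else 0.
Definition dual_j_left j s f := if isInt g i f then
  FK g rho u (prv f i) j s / 2 * ((u i f + u i (nbr f j s)) / 2) * phi f else 0.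
Definition dual_j_right j s f := if isInt g i f then
  FK g rho u f j s / 2 * ((u i f + u i (nbr f j s)) / 2) * phi f else 0.

Lemma dualsum_split : dualsum g rho u i phi =
  boxsum dual_i_left + boxsum dual_i_right + \sum_(j < 3 | j != i)
    (boxsum (dual_j_left j false) + boxsum (dual_j_right j false)
     + boxsum (dual_j_left j true) + boxsum (dual_j_right j true)).
Proof.
under eq_bigr do rewrite -!boxsumD.
rewrite -exchange_boxsum -!boxsumD /dualsum sumI_mkcond; apply: eq_boxsum => f.
rewrite /dual_i_left /dual_i_right /dual_j_left /dual_j_right.
case: (isInt g i f); last by rewrite big1 ?addr0.
rewrite !mulrDl mulr_suml; congr (_ + _); apply: eq_bigr => j _.
by rewrite big_bool /=; ring.
Qed.

Lemma dual_i_right_cellwise :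
  boxsum dual_i_right = boxsum (fun K => if inM g K then cell_weight K * phi K else 0).
Proof.
apply: eq_boxsum => f; rewrite /dual_i_right.
case hM: (inM g f); last first.
  by case hI: (isInt g i f) => //; rewrite (isInt_inM hI) in hM.
case hI: (isInt g i f); last by rewrite hphi ?mulr0 // isBnd_inM // hI.
by rewrite /FdualI /sgn /= FK_false FK_true hM /cell_weight; ring.
Qed.

Lemma dual_i_left_cellwise : boxsum dual_i_left =
  boxsum (fun K => if inM g K then - (cell_weight K * phi (nxt K i)) else 0).
Proof.
pose H f := if (0 < coord f i)%N && inM g (prv f i)
  then - (cell_weight (prv f i) * phi f) else 0.
transitivity (boxsum H); last first.
  rewrite -(@boxsum_shift _ _ i H).
  - by apply: eq_boxsum => K; rewrite /H coord_nxt eqxx prv_nxt.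
  - by move=> k hk; rewrite /H hk.
  - move=> k hk; rewrite /H prv_nxt; case hM: (inM g k); last by rewrite andbF.
    by case: (inM_coordN hM hk).
apply: eq_boxsum => f; rewrite /dual_i_left /H.
case h0: (0 < coord f i)%N; last by rewrite /isInt h0.
case hM: (inM g (prv f i)); last by rewrite /isInt h0 hM.
move: (prv f i) (nxt_prv h0) hM => K <- hM /=.
rewrite isInt_nxt hM /=; case hM2: (inM g (nxt K i)).
  by rewrite /FdualI /sgn /= FK_false FK_true hM /cell_weight; ring.
by rewrite hphi ?mulr0 ?oppr0 // isBnd_inM_prv ?coord_nxt ?eqxx ?prv_nxt ?isInt_nxt ?hM ?hM2.
Qed.

Lemma dual_i_eq_Si : boxsum dual_i_left + boxsum dual_i_right = Si g rho u i phi.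
Proof.
rewrite dual_i_left_cellwise dual_i_right_cellwise Si_cellwise addrC -boxsumD.
by apply: eq_boxsum => K; case: (inM g K); rewrite ?addr0 // mulrBr.
Qed.

Section TransverseDirection.
Variable j : 'I_3.
Hypothesis hji : j != i.

(* [tau_term k t] is the part of the summand of S_j at tau = t carrying
   phi_{sigma_k}, with sigma_1 = t, sigma_2 = nxt t i, sigma_3 = prv t j,
   sigma_4 = nxt (prv t j) i. *)
Definition tau_term1 t := if isInt g j t then
  - (quarter_flux j t * (u i (prv t j) + u i t) * phi t) else 0.
Definition tau_term2 t := if isInt g j t then
  - (quarter_flux j t * (u i (nxt (prv t j) i) + u i (nxt t i)) * phi (nxt t i))
  else 0.
Definition tau_term3 t := if isInt g j t then
  quarter_flux j t * (u i (prv t j) + u i t) * phi (prv t j) else 0.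
Definition tau_term4 t := if isInt g j t then
  quarter_flux j t * (u i (nxt (prv t j) i) + u i (nxt t i)) * phi (nxt (prv t j) i)
  else 0.

Lemma dual_j_right_false_tau : boxsum (dual_j_right j false) = boxsum tau_term1.
Proof.
apply: eq_boxsum => f; rewrite /dual_j_right /tau_term1 /nbr FK_false.
case hIi: (isInt g i f); case hIj: (isInt g j f) => //.
- by rewrite (isInt_inM hIi) /quarter_flux; field.
- rewrite (isInt_inM hIi) (hu (isBnd_inM (isInt_inM hIi) (negbT hIj))).
  by rewrite !mulr0 oppr0 !mul0r.
- by rewrite hphi ?mulr0 ?oppr0 // isBnd_inM ?(isInt_inM hIj) ?hIi.
Qed.

Lemma dual_j_right_true_tau : boxsum (dual_j_right j true) = boxsum tau_term3.
Proof.
rewrite -(@boxsum_shift _ _ j tau_term3); first last.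
- by move=> k hk; rewrite /tau_term3 isInt_nxt_coordN.
- by move=> k hk; rewrite /tau_term3 isInt_coord0.
apply: eq_boxsum => f.
rewrite /dual_j_right /tau_term3 /nbr FK_true prv_nxt /quarter_flux area_nxt.
case hIi: (isInt g i f); case hIj: (isInt g j (nxt f j)) => //.
- by rewrite (isInt_inM hIi); field.
- rewrite (isInt_inM hIi) (hu (j := j) (f := nxt f j)) ?mulr0 ?mul0r //.
  by rewrite isBnd_inM_prv ?coord_nxt ?eqxx ?prv_nxt ?(isInt_inM hIi) ?hIj.
- move: hIj; rewrite isInt_nxt => /andP[hM _].
  by rewrite hphi ?mulr0 // isBnd_inM ?hIi.
Qed.

Lemma dual_j_left_false_tau : boxsum (dual_j_left j false) = boxsum tau_term2.
Proof.
pose H f := if (0 < coord f i)%N then tau_term2 (prv f i) else 0.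
transitivity (boxsum H); last first.
  rewrite -(@boxsum_shift _ _ i H).
  - by apply: eq_boxsum => K; rewrite /H coord_nxt eqxx prv_nxt.
  - by move=> k hk; rewrite /H hk.
  - move=> k hk; rewrite /H prv_nxt coord_nxt eqxx /tau_term2.
    by case hI: (isInt g j k) => //; case: (inM_coordN (isInt_inM hI) hk).
apply: eq_boxsum => f; rewrite /dual_j_left /H /nbr.
case h0: (0 < coord f i)%N; last by rewrite /isInt h0.
rewrite /tau_term2; move: (prv f i) (nxt_prv h0) => c <-.
rewrite -nxt_prvC // FK_false isInt_nxt.
case hIj: (isInt g j c); case hM: (inM g c); case hM2: (inM g (nxt c i)) => //=.
- by rewrite /quarter_flux; field.
- rewrite hphi ?mulr0 ?oppr0 //.
  by rewrite isBnd_inM_prv ?coord_nxt ?eqxx ?prv_nxt ?isInt_nxt ?hM ?hM2.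
- by rewrite (isInt_inM hIj) in hM.
- by rewrite (isInt_inM hIj) in hM.
- by rewrite (hu (isBnd_inM hM (negbT hIj))) !mulr0 oppr0 !mul0r.
Qed.

Lemma dual_j_left_true_tau : boxsum (dual_j_left j true) = boxsum tau_term4.
Proof.
pose H f := if (0 < coord f i)%N then tau_term4 (nxt (prv f i) j) else 0.
transitivity (boxsum H); last first.
  rewrite -(@boxsum_shift _ _ j tau_term4); first last.
  - by move=> k hk; rewrite /tau_term4 isInt_nxt_coordN.
  - by move=> k hk; rewrite /tau_term4 isInt_coord0.
  rewrite -(@boxsum_shift _ _ i H).
  - by apply: eq_boxsum => K; rewrite /H coord_nxt eqxx prv_nxt.
  - by move=> k hk; rewrite /H hk.
  - move=> k hk; rewrite /H prv_nxt coord_nxt eqxx /tau_term4 isInt_nxt.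
    by case hM: (inM g k) => //=; case: (inM_coordN hM hk).
apply: eq_boxsum => f; rewrite /dual_j_left /H /nbr.
case h0: (0 < coord f i)%N; last by rewrite /isInt h0.
rewrite /tau_term4; move: (prv f i) (nxt_prv h0) => c <-.
rewrite FK_true !isInt_nxt prv_nxt nxtC /quarter_flux area_nxt.
case hM: (inM g c); case hM2: (inM g (nxt c i)); case hM3: (inM g (nxt c j)) => //=.
- by field.
- rewrite (hu (j := j) (f := nxt c j)) ?mulr0 ?mul0r //.
  by rewrite isBnd_inM_prv ?coord_nxt ?eqxx ?prv_nxt ?isInt_nxt ?hM ?hM3.
- rewrite hphi ?mulr0 //.
  by rewrite isBnd_inM_prv ?coord_nxt ?eqxx ?prv_nxt ?isInt_nxt ?hM ?hM2.
Qed.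

Lemma dual_j_eq_Sj :
  boxsum (dual_j_left j false) + boxsum (dual_j_right j false)
  + boxsum (dual_j_left j true) + boxsum (dual_j_right j true) = Sj g rho u i phi j.
Proof.
rewrite dual_j_right_false_tau dual_j_left_false_tau dual_j_right_true_tau.
rewrite dual_j_left_true_tau Sj_facewise // -!boxsumD; apply: eq_boxsum => t.
rewrite /tau_term1 /tau_term2 /tau_term3 /tau_term4.
by case: (isInt g j t); rewrite ?addr0 //; ring.
Qed.

End TransverseDirection.

End Fluxes.

Theorem lemma7p3 (R : realType) (g : MACgrid R) (rho : idx -> R)
  (u : 'I_3 -> idx -> R)
  (hu : forall (j : 'I_3) (f : idx), isBnd g j f -> u j f = 0)
  (i : 'I_3) (phi : idx -> R)
  (hphi : forall f : idx, isBnd g i f -> phi f = 0) :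
  dualsum g rho u i phi = \sum_(j < 3) Sdir g rho u i phi j.
Proof.
rewrite dualsum_split (dual_i_eq_Si rho hu hphi) [RHS](bigD1 i) //= /Sdir eqxx.
congr (_ + _); apply: eq_bigr => j hj; rewrite (negbTE hj).
exact: dual_j_eq_Sj.
Qed.
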